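(* (Zig Zag Lemma.) Let $\sigma : X^* \to M$ be a monoid choice of generators for a monoid $M$, let $x, y \in M$, let $n \geq 1$ and let $u_0, \dots, u_{n-1}, v_1, \dots, v_n \in X^*$. Then the following are equivalent: (i) the loop automaton of $M$ with respect to $\sigma$ has a path from $x$ to $y$ labelled $u_0 \overline{v_1} u_1 \overline{v_2} \cdots u_{n-1}\overline{v_n}$; (ii) there exist $p_0, \dots, p_n \in M$ with $p_0 = x$, $p_n = y$, and $p_i(u_i\sigma) = p_{i+1}(v_{i+1}\sigma)$ for $0 \leq i < n$.
   Context: Maps are written on the right. $X^*$ is the free monoid on $X$; a choice of generators is a surjective monoid morphism. Let $\overline{X} = \{\overline{x} : x \in X\}$ be new symbols, $\hat{X} = X \cup \overline{X}$, and extend $x \mapsto \overline{x}$ to an involution of $\hat{X}^*$ by $\overline{\overline{x}} = x$, $\overline{x_1\cdots x_n} = \overline{x_n}\cdots\overline{x_1}$. The loop automaton of $M$ w.r.t. $\sigma$ is the directed labelled graph with vertex set $M$ having, for each $a \in M$, $x \in X$, an edge $a \to a(x\sigma)$ labelled $x$ and an edge $a(x\sigma) \to a$ labelled $\overline{x}$; path labels are concatenations of edge labels. *)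

From mathcomp Require Import all_boot.
Set Implicit Arguments. Unset Strict Implicit. Unset Printing Implicit Defensive.

Record monoid := Monoid {
  mcar :> Type;
  mmul : mcar -> mcar -> mcar;
  mone : mcar;
  mmulA : forall a b c, mmul a (mmul b c) = mmul (mmul a b) c;
  mmul1 : forall a, mmul mone a = a;
  mmul1r : forall a, mmul a mone = a }.

(* Free monoid X^* = seq X (concatenation, unit [::]).  A monoid choice of
   generators is a surjective monoid morphism sigma : X^* -> M. *)
Definition choice_of_generators (X : Type) (M : monoid) (sigma : seq X -> M) :=
  [/\ sigma [::] = mone M,
      (forall u v, sigma (u ++ v) = mmul (sigma u) (sigma v))
    & forall m : M, exists u, sigma u = m].

(* hat X = X + bar X: inl x is x, inr x is bar x. *)
Definition hletter (X : Type) := (X + X)%type.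

Definition bar_letter (X : Type) (l : hletter X) : hletter X :=
  match l with inl x => inr x | inr x => inl x end.

Definition bar_word (X : Type) (w : seq (hletter X)) : seq (hletter X) :=
  rev (map (@bar_letter X) w).

Definition emb (X : Type) (u : seq X) : seq (hletter X) := map inl u.

(* Edges of the loop automaton (maps on the right: a(x sigma) = a * sigma[x]):
   a --x--> a(x sigma)  and  a(x sigma) --bar x--> a. *)
Definition loop_edge (X : Type) (M : monoid) (sigma : seq X -> M)
  (a : M) (l : hletter X) (b : M) : Prop :=
  match l with
  | inl x => b = mmul a (sigma [:: x])
  | inr x => a = mmul b (sigma [:: x])
  end.

Inductive loop_path (X : Type) (M : monoid) (sigma : seq X -> M)
  : M -> seq (hletter X) -> M -> Prop :=
| lp_nil : forall a, loop_path sigma a [::] a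
| lp_cons : forall a l b w c,
    loop_edge sigma a l b -> loop_path sigma b w c -> loop_path sigma a (l :: w) c.

(* The zig-zag label u_0 bar(v_1) u_1 bar(v_2) ... u_{n-1} bar(v_n). *)
Definition zigzag (X : Type) (n : nat) (u v : nat -> seq X) : seq (hletter X) :=
  flatten [seq emb (u i) ++ bar_word (emb (v i.+1)) | i <- iota 0 n].

From mathcomp Require Import all_boot.

(* A path labelled by a word of X^* multiplies by its value, and reading a
   path backwards reads the barred word; so the labels u_i and bar(v_(i+1))
   move from p_i to p_i (u_i sigma) = p_(i+1) (v_(i+1) sigma) and then back
   down to p_(i+1). *)

Section LoopAutomaton.
Variables (X : Type) (M : monoid) (sigma : seq X -> M).

Lemma loop_path_nil a b : loop_path sigma a [::] b <-> b = a.
Proof. by split=> [H | ->]; [inversion H | constructor]. Qed.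

Lemma loop_path_cat a w1 w2 c :
  loop_path sigma a (w1 ++ w2) c <->
  exists2 b, loop_path sigma a w1 b & loop_path sigma b w2 c.
Proof.
split.
- elim: w1 a => [|l w1 IH] a /= H; first by exists a => //; constructor.
  inversion H as [|a' l' b w c' Hab Hbc]; subst.
  have [b' Hb Hc] := IH _ Hbc.
  by exists b' => //; apply: lp_cons Hab Hb.
- case=> b H1; elim: H1 => //= a0 l b0 w c0 He _ IH /IH.
  exact: lp_cons He.
Qed.

Lemma loop_edge_bar a l b :
  loop_edge sigma a (bar_letter l) b <-> loop_edge sigma b l a.
Proof. by case: l. Qed.

Lemma bar_wordK : involutive (@bar_word X).
Proof.
move=> w; rewrite /bar_word map_rev revK -map_comp.
by rewrite (eq_map (_ : @bar_letter X \o @bar_letter X =1 id)) ?map_id // => -[].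
Qed.

Lemma loop_path_rev a w b :
  loop_path sigma a w b -> loop_path sigma b (bar_word w) a.
Proof.
elim=> [c | c l d w' e Hcd _ IH]; first exact: lp_nil.
rewrite /bar_word map_cons rev_cons -cats1; apply/loop_path_cat; exists d => //.
by apply: (lp_cons (b := c)) (lp_nil _ _); apply/loop_edge_bar.
Qed.

Lemma loop_path_bar a w b :
  loop_path sigma a (bar_word w) b <-> loop_path sigma b w a.
Proof.
split=> [/loop_path_rev | /loop_path_rev //].
by rewrite bar_wordK.
Qed.

Hypothesis sigma_nil : sigma [::] = mone M.
Hypothesis sigma_cat : forall u v, sigma (u ++ v) = mmul (sigma u) (sigma v).

Lemma loop_path_emb a u b : loop_path sigma a (emb u) b <-> b = mmul a (sigma u).
Proof.
elim: u a => [|x u IH] a /=; first by rewrite sigma_nil mmul1r; apply: loop_path_nil.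
rewrite -[x :: u]cat1s sigma_cat mmulA; split.
- move=> H; inversion H as [|a' l c w c' Hac Hcb]; subst.
  by move: Hac => /= Hac; subst; apply: (IH _).1.
- by move=> eq_b; apply: (lp_cons (b := mmul a (sigma [:: x]))) => //; exact: (IH _).2.
Qed.

Lemma loop_path_bar_emb a v b :
  loop_path sigma a (bar_word (emb v)) b <-> a = mmul b (sigma v).
Proof. exact: iff_trans (loop_path_bar _ _ _) (loop_path_emb _ _ _). Qed.

Lemma zigzagS n (u v : nat -> seq X) :
  zigzag n.+1 u v = zigzag n u v ++ (emb (u n) ++ bar_word (emb (v n.+1))).
Proof.
by rewrite /zigzag -addn1 iotaD map_cat flatten_cat /= cats0 add0n addn1.
Qed.

Lemma loop_path_zigzag x y n (u v : nat -> seq X) :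
  loop_path sigma x (zigzag n u v) y <->
  exists p : nat -> M,
    [/\ p 0 = x, p n = y &
        forall i, i < n -> mmul (p i) (sigma (u i)) = mmul (p i.+1) (sigma (v i.+1))].
Proof.
elim: n y => [|n IH] y.
  apply: iff_trans (loop_path_nil _ _) _; split=> [-> | [p [<- <- _]] //].
  by exists (fun=> x).
rewrite zigzagS; split.
- case/loop_path_cat=> b /IH [p [p0 pn hp]].
  case/loop_path_cat=> c /loop_path_emb -> /loop_path_bar_emb hy.
  exists (fun i => if i == n.+1 then y else p i); split => //; first by rewrite eqxx.
  move=> i; rewrite ltnS leq_eqVlt => /predU1P [-> | lt_in].
    by rewrite eqxx (ltn_eqF (ltnSn n)) pn hy.
  by rewrite (ltn_eqF (leqW lt_in)) eqSS (ltn_eqF lt_in) hp.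
- case=> p [p0 pn hp]; apply/loop_path_cat; exists (p n).
    by apply/IH; exists p; split=> // i lt_in; apply/hp/ltnW.
  apply/loop_path_cat; exists (mmul (p n) (sigma (u n))); first exact/loop_path_emb.
  by apply/loop_path_bar_emb; rewrite -pn; apply: hp.
Qed.

End LoopAutomaton.

Theorem lemma4p1 (X : Type) (M : monoid) (sigma : seq X -> M)
  (hsigma : choice_of_generators sigma) (x y : M) (n : nat) (hn : 1 <= n)
  (u v : nat -> seq X) :
  loop_path sigma x (zigzag n u v) y <->
  exists p : nat -> M,
    [/\ p 0 = x, p n = y &
        forall i, i < n -> mmul (p i) (sigma (u i)) = mmul (p i.+1) (sigma (v i.+1))].
Proof.
by case: hsigma => sigma_nil sigma_cat _; apply: loop_path_zigzag.
Qed.
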